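(* Let $X$ be a finite connected poset with $|X|>2$. Then the group $\mathcal{P}(X)$ is isomorphic to $\mathrm{Aut}^\pm(X)$.
   Context: $\mathrm{Aut}(X)$ is the group of poset automorphisms of $X$, $\mathrm{Aut}^-(X)$ the set of anti-automorphisms (order-reversing bijections $X\to X$), and $\mathrm{Aut}^\pm(X)=\mathrm{Aut}(X)\cup\mathrm{Aut}^-(X)$, a group under composition. For $x<y$ in $X$, $e_{xy}$ denotes the incidence-algebra basis element (indicator of $(x,y)$), and $B=\{e_{xy}:x<y\}$. A bijection $\theta:B\to B$ is proper if there is $\lambda\in\mathrm{Aut}(X)$ with $\theta(e_{xy})=e_{\lambda(x)\lambda(y)}$ for all $x<y$, or $\lambda\in\mathrm{Aut}^-(X)$ with $\theta(e_{xy})=e_{\lambda(y)\lambda(x)}$ for all $x<y$; $\mathcal{P}(X)$ is the group of proper bijections of $B$. *)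

From mathcomp Require Import all_boot all_order all_fingroup.
Set Implicit Arguments. Unset Strict Implicit. Unset Printing Implicit Defensive.
Import Order.Theory.
Local Open Scope order_scope.

Section PosetDefs.
Context {d : Order.disp_t} {T : finPOrderType d}.

Definition poset_connected : Prop :=
  forall x y : T, connect (fun a b : T => a >=< b) x y.

Definition is_aut (f : {perm T}) : bool :=
  [forall x, forall y, (f x <= f y) == (x <= y)].
Definition is_antiaut (f : {perm T}) : bool :=
  [forall x, forall y, (f x <= f y) == (y <= x)].

Definition AutPM : {set {perm T}} := [set f | is_aut f || is_antiaut f].

(* B = { e_xy : x < y }, encoded as the pairs (x,y) with x < y. *)
Definition Bset := {p : T * T | p.1 < p.2}.

Definition proper_bij (th : {perm Bset}) : bool :=
  [exists l : {perm T},
     (is_aut l && [forall b : Bset, val (th b) == (l (val b).1, l (val b).2)])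
  || (is_antiaut l && [forall b : Bset, val (th b) == (l (val b).2, l (val b).1)])].

Definition PX : {set {perm Bset}} := [set th | proper_bij th].
End PosetDefs.

From mathcomp Require Import all_boot all_order all_fingroup.
Set Implicit Arguments. Unset Strict Implicit. Unset Printing Implicit Defensive.
Import Order.Theory.

(* Every l in Aut^{+-}(X) induces the proper bijection theta_l of B, and as
   soon as X has a strict pair x < y the sign of l (order-preserving or
   order-reversing) is determined by l, which makes l |-> theta_l a group
   morphism onto P(X).  It is injective: if theta_l fixes every e_xy, then l
   fixes every point having a comparable neighbour when l preserves the order
   (all points, X being connected with at least two elements), while when l
   reverses the order it sends every point to each of its comparable
   neighbours, which is impossible because a connected poset with at least
   three points has a point with two distinct comparable neighbours. *)

Section SignedAutomorphisms.
Context {d : Order.disp_t} {T : finPOrderType d}.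
Local Open Scope order_scope.
Local Open Scope group_scope.
Implicit Types (b c : bool) (l m : {perm T}).

Definition is_signed_aut b l : bool :=
  [forall x, forall y, (l x <= l y) == (if b then y <= x else x <= y)].

Lemma is_autE l : is_aut l = is_signed_aut false l. Proof. by []. Qed.

Lemma is_antiautE l : is_antiaut l = is_signed_aut true l. Proof. by []. Qed.

Lemma signed_autP b l :
  reflect (forall x y, (l x <= l y) = (if b then y <= x else x <= y))
          (is_signed_aut b l).
Proof.
apply: (iffP forallP) => [H x y | H x]; last by apply/forallP => y; rewrite H.
by apply/eqP; move/forallP: (H x).
Qed.

Lemma signed_aut_lt b l x y :
  is_signed_aut b l -> (l x < l y) = (if b then y < x else x < y).
Proof.
by move/signed_autP=> H; rewrite !lt_def (inj_eq perm_inj) H; case: b {H}; rewrite // eq_sym.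
Qed.

Lemma signed_aut1 : is_signed_aut false 1.
Proof. by apply/signed_autP => x y; rewrite !perm1. Qed.

Lemma signed_autM b c l m :
  is_signed_aut b l -> is_signed_aut c m -> is_signed_aut (b (+) c) (l * m).
Proof.
move=> /signed_autP hl /signed_autP hm; apply/signed_autP => x y.
by rewrite !permM hm; case: c {hm}; rewrite hl; case: b {hl}.
Qed.

Lemma AutPMP l : reflect (exists b, is_signed_aut b l) (l \in AutPM).
Proof.
rewrite inE is_autE is_antiautE.
by apply: (iffP orP) => [[] hl | [[] hl]]; [exists false | exists true | right | left].
Qed.

Lemma AutPM_group_set : group_set (AutPM (T := T)).
Proof.
apply/group_setP; split=> [|l m /AutPMP[b hl] /AutPMP[c hm]]; apply/AutPMP.
  by exists false; apply: signed_aut1.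
by exists (b (+) c); apply: signed_autM.
Qed.

Canonical AutPM_group := Group AutPM_group_set.

Lemma signed_aut_uniq b c l :
  (exists x y : T, x < y) -> is_signed_aut b l -> is_signed_aut c l -> b = c.
Proof.
move=> [x [y xy]] hb hc; have := signed_aut_lt x y hb.
by rewrite (signed_aut_lt x y hc) xy (lt_gtF xy); case: b c {hb hc} => [] [].
Qed.

End SignedAutomorphisms.

Section InducedBijection.
Context {d : Order.disp_t} {T : finPOrderType d}.
Local Open Scope order_scope.
Local Open Scope group_scope.
Local Notation B := (@Bset d T).
Implicit Types (b c : bool) (l m : {perm T}) (p : T * T).

Definition signed_pair b l p : T * T :=
  if b then (l p.2, l p.1) else (l p.1, l p.2).

Lemma signed_pairM b c l m p :
  signed_pair (b (+) c) (l * m) p = signed_pair c m (signed_pair b l p).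
Proof. by case: b c => [] []; rewrite /signed_pair /= !permM. Qed.

(* Outside Aut^{+-}(X) the identity is used, only so that [induced l] below
   is a permutation of B for every l. *)
Definition induced_pair l p : T * T :=
  if l \in AutPM then signed_pair (~~ is_aut l) l p else p.

Lemma AutPM_signed l : l \in AutPM -> is_signed_aut (~~ is_aut l) l.
Proof. by rewrite inE; case: (boolP (is_aut l)). Qed.

Lemma induced_pair_lt l (e : B) :
  (induced_pair l (val e)).1 < (induced_pair l (val e)).2.
Proof.
rewrite /induced_pair; case: ifP => [/AutPM_signed | _]; last exact: (valP e).
by rewrite /signed_pair; case: (~~ is_aut l) => hl /=; rewrite (signed_aut_lt _ _ hl) (valP e).
Qed.

Lemma induced_pair_inj l : injective (induced_pair l).
Proof.
move=> [x1 x2] [y1 y2]; rewrite /induced_pair; case: ifP => // _.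
by case: (~~ is_aut l) => /= -[/perm_inj-> /perm_inj->].
Qed.

Definition induced_fun l (e : B) : B := Sub (induced_pair l (val e)) (induced_pair_lt l e).

Lemma induced_fun_inj l : injective (induced_fun l).
Proof. by move=> e e' /(congr1 val); rewrite !SubK => /induced_pair_inj/val_inj. Qed.

Definition induced l : {perm B} := perm (@induced_fun_inj l).

Lemma val_induced l e : val (induced l e) = induced_pair l (val e).
Proof. by rewrite permE SubK. Qed.

Lemma proper_bijP (th : {perm B}) :
  reflect (exists b l, is_signed_aut b l /\ forall e, val (th e) = signed_pair b l (val e))
          (proper_bij th).
Proof.
apply: (iffP existsP) => [[l /orP[] /andP[hl /forallP E]] | [[] [l [hl E]]]].
- by exists false, l; split=> // e; apply/eqP/E.
- by exists true, l; split=> // e; apply/eqP/E.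
- exists l; apply/orP; right; rewrite is_antiautE hl.
  by apply/forallP => e; apply/eqP/E.
- exists l; apply/orP; left; rewrite is_autE hl.
  by apply/forallP => e; apply/eqP/E.
Qed.

Hypothesis not_antichain : exists x y : T, x < y.

Lemma induced_pairE b l p : is_signed_aut b l -> induced_pair l p = signed_pair b l p.
Proof.
move=> hl; have Gl : l \in AutPM by apply/AutPMP; exists b.
by rewrite /induced_pair Gl (signed_aut_uniq not_antichain (AutPM_signed Gl) hl).
Qed.

Lemma inducedM : {in AutPM &, {morph induced : l m / l * m}}.
Proof.
move=> l m /AutPMP[b hl] /AutPMP[c hm]; apply/permP => e; apply: val_inj.
rewrite permM !val_induced (induced_pairE _ (signed_autM hl hm)).
by rewrite (induced_pairE _ hl) (induced_pairE _ hm) signed_pairM.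
Qed.

Lemma im_induced : induced @: AutPM = PX.
Proof.
apply/setP => th; rewrite inE.
apply/imsetP/proper_bijP => [[l /AutPMP[b hl] ->] | [b [l [hl E]]]].
  by exists b, l; split=> // e; rewrite val_induced (induced_pairE _ hl).
exists l; first by apply/AutPMP; exists b.
by apply/permP => e; apply: val_inj; rewrite val_induced (induced_pairE _ hl) E.
Qed.

End InducedBijection.

Lemma comparable_neq_lt {d : Order.disp_t} {T : porderType d} (a c : T) :
  a != c -> (a >=< c)%O -> ((a < c) || (c < a))%O.
Proof. by move=> neq ac; rewrite !lt_neqAle (eq_sym c) neq. Qed.

Section ConnectedPoset.
Context {d : Order.disp_t} {T : finPOrderType d}.
Local Open Scope order_scope.
Local Open Scope group_scope.
Hypothesis conn : poset_connected (T := T).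

Lemma comparable_closed_setT (S : {set T}) (x : T) :
  x \in S -> (forall a c, a \in S -> a >=< c -> c \in S) -> S = [set: T].
Proof.
move=> Sx clS; apply/setP => z; rewrite inE.
have symS : connect_sym (fun a c : T => a >=< c).
  by apply: sym_connect_sym => a c; rewrite comparable_sym.
by rewrite -(closed_connect (intro_closed symS (fun a c ac Sa => clS a c Sa ac)) (conn x z)).
Qed.

Lemma exists_comparable_neq (x : T) : (1 < #|T|)%N -> exists2 c, x != c & x >=< c.
Proof.
move=> T2; case: (pickP (fun c => (x != c) && (x >=< c))) => [c /andP[]|none].
  by exists c.
suff T1 : [set x] = [set: T] by move: T2; rewrite -cardsT -T1 cards1.
apply: comparable_closed_setT (set11 x) _ => a c /set1P-> xc.
by have /= := none c; rewrite xc andbT inE eq_sym => /negbFE.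
Qed.

Lemma exists_lt : (1 < #|T|)%N -> exists x y : T, x < y.
Proof.
move=> T2; have /card_gt0P[x _] := ltnW T2.
have [c neq xc] := exists_comparable_neq x T2.
by case/orP: (comparable_neq_lt neq xc) => ?; [exists x, c | exists c, x].
Qed.

Lemma exists_two_comparable : (2 < #|T|)%N ->
  exists a c c' : T, [/\ a != c, a != c', c != c', a >=< c & a >=< c'].
Proof.
move=> T3; have [x [y xy]] := exists_lt (ltnW T3).
case: (pickP (fun c => (c \notin [set x; y]) && ((x >=< c) || (y >=< c))))
  => [c /andP[] | none].
  rewrite !inE negb_or => /andP[cx cy] /orP[xc|yc].
    by exists x, y, c; split; rewrite ?(lt_eqF xy) ?(lt_comparable xy) // eq_sym.
  exists y, x, c; split; rewrite 1?eq_sym ?(lt_eqF xy) //.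
  by rewrite comparable_sym lt_comparable.
suff Sxy : [set x; y] = [set: T] by move: T3; rewrite -cardsT -Sxy cards2; case: (x != y).
apply: comparable_closed_setT (set21 x y) _ => a c Sa ac.
apply: contraT => cS; have /= := none c; rewrite cS /=.
by case/set2P: Sa ac => -> ->; rewrite ?orbT.
Qed.

Lemma induced_eq1 (l : {perm T}) : (2 < #|T|)%N -> l \in AutPM -> induced l = 1 -> l = 1.
Proof.
move=> T3 /AutPMP[b hl] l1; have not_antichain := exists_lt (ltnW T3).
have image_comparable a c : a != c -> a >=< c -> l a = if b then c else a.
  move=> neq /(comparable_neq_lt neq)/orP[] ac; have := val_induced l (Sub (_, _) ac);
    by rewrite l1 perm1 SubK (induced_pairE not_antichain _ hl); case: b {hl} => -[].
case: b hl image_comparable => hl image_comparable.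
  have [a [c [c' [ac ac' cc' Cac Cac']]]] := exists_two_comparable T3.
  by move: cc'; rewrite -(image_comparable _ _ ac Cac) -(image_comparable _ _ ac' Cac') eqxx.
apply/permP => x; rewrite perm1.
by have [c xc Cxc] := exists_comparable_neq x (ltnW T3); apply: image_comparable xc Cxc.
Qed.

End ConnectedPoset.

Theorem proposition2p3 (d : Order.disp_t) (T : finPOrderType d) :
  poset_connected (T := T) -> 2 < #|T| ->
  (PX (T := T)) \isog (AutPM (T := T)).
Proof.
move=> conn T3; have not_antichain := exists_lt conn (ltnW T3).
pose f := Morphism (inducedM not_antichain).
have inj_f : ('injm f)%g.
  apply/subsetP => l /morphpreP[Gl /set1P fl1]; apply/set1P.
  exact: induced_eq1 conn l T3 Gl fl1.
have im_f : (f @* AutPM)%g = PX by rewrite morphimEdom; apply: im_induced.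
by rewrite -im_f isog_sym sub_isog.
Qed.
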